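(* Let $\rho\in(0,1)$ and $\lambda=\frac{1-\rho}{1+\rho}$. Let $(x_i)_{i\in\mathbb Z}$ be real numbers with $|x_i|<M$ for all $i$, for some constant $M<\infty$. Define $y_i(k)$ for all $i\in\mathbb Z$ and $k\ge 0$ by $y_i(0)=\lambda x_i$; $y_i(1)=y_i(0)+\rho\,(y_{i-1}(0)+y_{i+1}(0))$; $y_i(2)=y_i(1)+\rho\,(y_{i-1}(1)-y_{i-1}(0))+\rho\,(y_{i+1}(1)-y_{i+1}(0))-2\rho^2 y_i(0)$; and for $k\ge 2$, $y_i(k+1)=y_i(k)+\rho\,(y_{i-1}(k)-y_{i-1}(k-1))+\rho\,(y_{i+1}(k)-y_{i+1}(k-1))-\rho^2\,(y_i(k-1)-y_i(k-2))$. Then for every $i\in\mathbb Z$, $$\lim_{k\to\infty}y_i(k)=\frac{1-\rho}{1+\rho}\Big(x_i+\sum_{j=1}^\infty\rho^j\,(x_{i-j}+x_{i+j})\Big).$$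
   Context: Sensors indexed by $i\in\mathbb Z$ are placed along a line; sensor $i$ holds a time-invariant measurement $x_i$ and a consensus variable $y_i(k)$ at discrete times $k=0,1,2,\dots$; sensor $i$ may only use its own values and those of sensors $i-1$ and $i+1$. *)

From Stdlib Require Import Reals ZArith.
Open Scope R_scope.

From Stdlib Require Import Reals ZArith Lra Lia.
From Coquelicot Require Import Coquelicot.
Open Scope R_scope.

(* Write [c i = y_i(0)] and let [dist_pair c i n] be the sum
   [c (i - n) + c (i + n)] of the initial values at distance [n] from [i].
   The recursion for [y] is designed so that the increments are explicit:
       y_i(n+1) - y_i(n) = rho^(n+1) * dist_pair c i (n+1).
   This is proved by a two-step induction on [n]; the only combinatorial
   input is the identity
       dist_pair c (i-1) (n+1) + dist_pair c (i+1) (n+1)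
         = dist_pair c i (n+2) + dist_pair c i n,
   which makes the [rho^2] correction term of the recursion cancel the
   contributions that travel back towards [i].  Telescoping then gives
   [y_i(n+1) = lambda * (x_i + sum_{j<=n} rho^(j+1) dist_pair x i (j+1))],
   and since [x] is bounded these partial sums are dominated by a geometric
   series, so they converge; the limit of [y_i] follows. *)

Definition dist_pair (c : Z -> R) (i : Z) (n : nat) : R :=
  c (i - Z.of_nat n)%Z + c (i + Z.of_nat n)%Z.

Lemma dist_pair_0 (c : Z -> R) (i : Z) : dist_pair c i 0 = 2 * c i.
Proof. unfold dist_pair; simpl Z.of_nat; rewrite Z.sub_0_r, Z.add_0_r; ring. Qed.

(* The sites at distance [n+1] from the two neighbours of [i] are exactly
   the sites at distance [n+2] and at distance [n] from [i]. *)
Lemma dist_pair_neighbours (c : Z -> R) (i : Z) (n : nat) :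
  dist_pair c i (S (S n)) =
  dist_pair c (i - 1) (S n) + dist_pair c (i + 1) (S n) - dist_pair c i n.
Proof.
  unfold dist_pair; rewrite !Nat2Z.inj_succ.
  replace (i - 1 - Z.succ (Z.of_nat n))%Z with (i - Z.succ (Z.succ (Z.of_nat n)))%Z by lia.
  replace (i + 1 + Z.succ (Z.of_nat n))%Z with (i + Z.succ (Z.succ (Z.of_nat n)))%Z by lia.
  replace (i - 1 + Z.succ (Z.of_nat n))%Z with (i + Z.of_nat n)%Z by lia.
  replace (i + 1 - Z.succ (Z.of_nat n))%Z with (i - Z.of_nat n)%Z by lia.
  ring.
Qed.

Lemma nat_two_step_ind (P : nat -> Prop) :
  P 0%nat -> P 1%nat -> (forall n, P n -> P (S n) -> P (S (S n))) ->
  forall n, P n.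
Proof.
  intros P0 P1 step n.
  enough (Hpair : P n /\ P (S n)) by exact (proj1 Hpair).
  induction n as [|n [Pn PSn]]; [split; assumption | split; auto].
Qed.

Lemma telescoping_sum (u d : nat -> R) :
  (forall n, u (S n) - u n = d n) -> forall n, u (S n) = u 0%nat + sum_f_R0 d n.
Proof.
  intros Hd n; induction n as [|n IH]; simpl sum_f_R0.
  - specialize (Hd 0%nat); lra.
  - specialize (Hd (S n)); lra.
Qed.

Lemma geometric_weighted_summable (rho B : R) (a : nat -> R) :
  0 <= rho < 1 -> (forall j, Rabs (a j) <= B) ->
  exists s, infinite_sum (fun j => rho ^ S j * a j) s.
Proof.
  intros Hrho Ha.
  assert (Hex : ex_series (fun j => rho ^ S j * a j)).
  { apply (@ex_series_le R_AbsRing R_CompleteNormedModule _ (fun j => (B * rho) * rho ^ j)).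
    - intro j; change (norm (rho ^ S j * a j)) with (Rabs (rho ^ S j * a j)).
      rewrite Rabs_mult, Rabs_right by (apply Rle_ge, pow_le; lra).
      replace (B * rho * rho ^ j) with (rho ^ S j * B) by (simpl; ring).
      apply Rmult_le_compat_l; [apply pow_le; lra | apply Ha].
    - apply (@ex_series_scal_l R_AbsRing R_NormedModule).
      apply ex_series_geom; rewrite Rabs_right; lra. }
  destruct Hex as [s Hs]; exists s; apply is_series_Reals, Hs.
Qed.

Section Increments.

Variables (rho : R) (y : Z -> nat -> R).

Hypothesis H1 : forall i : Z,
  y i 1%nat = y i 0%nat + rho * (y (i - 1)%Z 0%nat + y (i + 1)%Z 0%nat).
Hypothesis H2 : forall i : Z,
  y i 2%nat = y i 1%nat
              + rho * (y (i - 1)%Z 1%nat - y (i - 1)%Z 0%nat)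
              + rho * (y (i + 1)%Z 1%nat - y (i + 1)%Z 0%nat)
              - 2 * rho ^ 2 * y i 0%nat.
Hypothesis Hrec : forall (i : Z) (k : nat), (2 <= k)%nat ->
  y i (S k) = y i k
              + rho * (y (i - 1)%Z k - y (i - 1)%Z (k - 1)%nat)
              + rho * (y (i + 1)%Z k - y (i + 1)%Z (k - 1)%nat)
              - rho ^ 2 * (y i (k - 1)%nat - y i (k - 2)%nat).

Lemma increment_first (i : Z) :
  y i 1%nat - y i 0%nat = rho ^ 1 * dist_pair (fun j => y j 0%nat) i 1.
Proof. rewrite H1; unfold dist_pair; simpl Z.of_nat; ring. Qed.

Lemma increment_closed_form (n : nat) (i : Z) :
  y i (S n) - y i n = rho ^ S n * dist_pair (fun j => y j 0%nat) i (S n).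
Proof.
  revert i; apply (nat_two_step_ind
    (fun n => forall i, y i (S n) - y i n =
                        rho ^ S n * dist_pair (fun j => y j 0%nat) i (S n))).
  - exact increment_first.
  - intro i; rewrite H2, (increment_first (i - 1)), (increment_first (i + 1)).
    rewrite (dist_pair_neighbours _ i 0), dist_pair_0; cbv beta; ring.
  - intros k IHk IHSk i; rewrite (Hrec i (S (S k))) by lia.
    replace (S (S k) - 1)%nat with (S k) by lia.
    replace (S (S k) - 2)%nat with k by lia.
    rewrite (IHSk (i - 1)%Z), (IHSk (i + 1)%Z), (IHk i).
    rewrite (dist_pair_neighbours _ i (S k)); simpl pow; ring.
Qed.

Lemma y_partial_sums (i : Z) (n : nat) :
  y i (S n) = y i 0%nat
              + sum_f_R0 (fun j => rho ^ S j * dist_pair (fun k => y k 0%nat) i (S j)) n.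
Proof. exact (telescoping_sum (y i) _ (fun m => increment_closed_form m i) n). Qed.

End Increments.

Theorem theorem1 (rho : R) (x : Z -> R) (y : Z -> nat -> R)
  (Hrho : 0 < rho < 1)
  (Hbdd : exists M : R, forall i : Z, Rabs (x i) < M)
  (H0 : forall i : Z, y i 0%nat = (1 - rho) / (1 + rho) * x i)
  (H1 : forall i : Z,
      y i 1%nat = y i 0%nat + rho * (y (i - 1)%Z 0%nat + y (i + 1)%Z 0%nat))
  (H2 : forall i : Z,
      y i 2%nat = y i 1%nat
                  + rho * (y (i - 1)%Z 1%nat - y (i - 1)%Z 0%nat)
                  + rho * (y (i + 1)%Z 1%nat - y (i + 1)%Z 0%nat)
                  - 2 * rho ^ 2 * y i 0%nat)
  (Hrec : forall (i : Z) (k : nat), (2 <= k)%nat ->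
      y i (S k) = y i k
                  + rho * (y (i - 1)%Z k - y (i - 1)%Z (k - 1)%nat)
                  + rho * (y (i + 1)%Z k - y (i + 1)%Z (k - 1)%nat)
                  - rho ^ 2 * (y i (k - 1)%nat - y i (k - 2)%nat)) :
  forall i : Z,
    exists s : R,
      infinite_sum
        (fun j : nat => rho ^ (S j) *
           (x (i - Z.of_nat (S j))%Z + x (i + Z.of_nat (S j))%Z)) s /\
      Un_cv (fun k : nat => y i k) ((1 - rho) / (1 + rho) * (x i + s)).
Proof.
  intro i; destruct Hbdd as [M HM].
  set (lam := (1 - rho) / (1 + rho)) in *.
  destruct (geometric_weighted_summable rho (2 * M) (fun j => dist_pair x i (S j)))
    as [s Hs]; [lra | |].
  { intro j; unfold dist_pair; eapply Rle_trans; [apply Rabs_triang|].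
    generalize (HM (i - Z.of_nat (S j))%Z) (HM (i + Z.of_nat (S j))%Z); lra. }
  exists s; split; [exact Hs|].
  apply is_lim_seq_Reals, is_lim_seq_incr_1.
  apply (is_lim_seq_ext
    (fun n => lam * (x i + sum_f_R0 (fun j => rho ^ S j * dist_pair x i (S j)) n))).
  { intro n; rewrite (y_partial_sums rho y H1 H2 Hrec), H0, Rmult_plus_distr_l, scal_sum.
    f_equal; apply sum_eq; intros j _; unfold dist_pair; rewrite !H0; ring. }
  apply (is_lim_seq_scal_l _ lam (x i + s)).
  apply is_lim_seq_plus'; [apply is_lim_seq_const | apply is_lim_seq_Reals, Hs].
Qed.
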